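(* Let $1\le m\le N$, $a\in V$ and $b\in\wedge^m(V)$. Then $\partial(\mathbf{x})b\in\mathcal{P}_1\otimes\wedge^{m-1}(V)$ and $$\sum_{i=1}^Na_i\mathcal{D}_i\,\partial(\mathbf{x})b=(1+\gamma\kappa)\,\partial(a)b,$$ where the $\mathcal{D}_i$ are the Dunkl operators on $\mathcal{P}\otimes\wedge^{m-1}(V)$. In particular $\partial(\mathbf{x})b$ is singular for $\kappa=-1/\gamma$, i.e. $\mathcal{D}_i\partial(\mathbf{x})b=0$ for all $1\le i\le N$ when $\kappa=-1/\gamma$.
   Context: $R\subset\mathbb{R}^N$ is a reduced root system with $\operatorname{span}_{\mathbb{R}}R=\mathbb{R}^N$, $|v|^2=2$ for all $v\in R$, positive roots $R_+$; $W$ is the reflection group generated by $\sigma_v\colon x\mapsto x-\langle x,v\rangle v$, assumed to have one conjugacy class of reflections, so its reflection representation $\tau$ on $V=\mathbb{R}^N$ is irreducible. $\gamma:=2\#R_+/N$. For $a\in V$, $\partial(a)\colon\wedge^m(V)\to\wedge^{m-1}(V)$ is the linear map $\partial(a)(b_1\wedge\cdots\wedge b_m)=\sum_{i=1}^m(-1)^{i-1}\langle a,b_i\rangle\, b_1\wedge\cdots\wedge\widehat{b_i}\wedge\cdots\wedge b_m$. With $\{u_i\}$ the standard orthonormal basis and $\mathbf{x}=\sum_i x_i\otimes u_i$, $\partial(\mathbf{x})b:=\sum_{i=1}^N x_i\otimes\partial(u_i)b$. $\tau_k$ is the representation of $W$ on $\wedge^k(V)$ induced by $\tau$; $W$ acts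 on $\mathcal{P}\otimes\wedge^k(V)$ by $w(p(x)\otimes b)=p(xw)\otimes\tau_k(w)b$, and the Dunkl operators (constant parameter $\kappa$) are $\mathcal{D}_i(p\otimes b)=\frac{\partial p}{\partial x_i}\otimes b+\kappa\sum_{v\in R_+}\frac{p(x)-p(x\sigma_v)}{\langle x,v\rangle}v_i\otimes\tau_k(\sigma_v)b$. *)

From HB Require Import structures.
From mathcomp Require Import all_boot all_order all_algebra all_fingroup.
From mathcomp Require Import mpoly.
From Stdlib Require Import ClassicalEpsilon.
Set Implicit Arguments. Unset Strict Implicit. Unset Printing Implicit Defensive.
Import Order.TTheory GRing.Theory Num.Theory.
Local Open Scope ring_scope.

Section Defs.
Variables (R : realFieldType) (N : nat).

Definition dotv (u v : 'rV[R]_N) : R := \sum_(i < N) u 0 i * v 0 i.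

(* reflection sigma_v : x |-> x - <x,v> v, acting on row vectors x |-> x *m refl v *)
Definition refl (v : 'rV[R]_N) : 'M[R]_N := 1%:M - v^T *m v.

Definition root_system (Rs : seq 'rV[R]_N) : Prop :=
  [/\ uniq Rs,
      (forall v, v \in Rs -> dotv v v = 2),
      (forall u v, u \in Rs -> v \in Rs -> v *m refl u \in Rs),
      (forall v (c : R), v \in Rs -> c *: v \in Rs -> c = 1 \/ c = -1) &
      (1%:M <= \sum_(v <- Rs) <<v>>)%MS ].

Definition positive_roots (Rs Rp : seq 'rV[R]_N) : Prop :=
  uniq Rp /\ exists u0 : 'rV[R]_N,
    (forall v, v \in Rs -> dotv v u0 != 0) /\
    (forall v, (v \in Rp) = (v \in Rs) && (0 < dotv v u0)).

Definition in_W (Rs : seq 'rV[R]_N) (w : 'M[R]_N) : Prop :=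
  exists s : seq 'rV[R]_N, all (mem Rs) s /\ w = \prod_(u <- s) refl u.

Definition one_refl_class (Rs : seq 'rV[R]_N) : Prop :=
  forall u v, u \in Rs -> v \in Rs ->
    exists w, in_W Rs w /\ w \in unitmx /\ refl u = invmx w *m refl v *m w.

Definition gamma (Rp : seq 'rV[R]_N) : R := (2 * size Rp)%:R / N%:R.

(* wedge^k(V) is modelled as the alternating k-tensors: coordinate functions
   b : (indices i_1..i_k) -> R with b (t o s) = sgn(s) b t.  The identification
   is b_1 /\ ... /\ b_k  <->  sum_pi sgn(pi) b_pi1 (x) ... (x) b_pik. *)
Definition idx (k : nat) := {ffun 'I_k -> 'I_N}.
Definition tens (k : nat) (A : Type) := idx k -> A.

Definition alternating (k : nat) (A : lmodType R) (b : tens k A) : Prop :=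
  forall (s : 'S_k) (t : idx k), b [ffun j => t (s j)] = ((-1) ^+ s : R) *: b t.

Definition icons (k : nat) (i : 'I_N) (t : idx k) : idx k.+1 :=
  [ffun j : 'I_k.+1 => if unlift ord0 j is Some j' then t j' else i].

Definition dpart (k : nat) (a : 'rV[R]_N) (b : tens k.+1 R) : tens k R :=
  fun t => \sum_(i < N) a 0 i * b (icons i t).

(* tau_k(w) : induced action of a matrix w on k-tensors (e_i |-> e_i w). *)
Definition tauk (k : nat) (w : 'M[R]_N) (A : lmodType R) (b : tens k A) : tens k A :=
  fun t => \sum_(t' : idx k) (\prod_(j < k) w (t' j) (t j)) *: b t'.

Definition Pol := {mpoly R[N]}.

Definition P1 (p : Pol) : bool := all [pred m | mdeg m == 1%N] (msupp p).

Definition linp (v : 'rV[R]_N) : Pol := \sum_(i < N) v 0 i *: 'X_i.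

Definition xact (w : 'M[R]_N) (p : Pol) : Pol :=
  p \mPo [tuple \sum_(j < N) w j i *: 'X_j | i < N].

(* divided difference (p(x) - p(x sigma_v)) / <x, v>, as a polynomial *)
Definition ddiff (v : 'rV[R]_N) (p : Pol) : Pol :=
  epsilon (inhabits 0) (fun q : Pol => q * linp v = p - xact (refl v) p).

Definition Dunkl (Rp : seq 'rV[R]_N) (kappa : R) (k : nat) (i : 'I_N)
    (F : tens k Pol) : tens k Pol :=
  fun t => mderiv i (F t) +
    kappa *: \sum_(v <- Rp) v 0 i *: tauk (refl v) (fun t' => ddiff v (F t')) t.

Definition dpartx (k : nat) (b : tens k.+1 R) : tens k Pol :=
  fun t => \sum_(i < N) dpart (delta_mx 0 i) b t *: 'X_i.

End Defs.

(* The polynomial partial(x) b = sum_i x_i (x) partial(u_i) b is linear in x,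
   so its i-th derivative is partial(u_i) b and its divided difference along a
   root v is the constant partial(v) b.  As partial(v) partial(v) b = 0,
   sigma_v = 1 - v^T v acts trivially on partial(v) b, whence
   D_i partial(x) b = partial(u_i) b + kappa sum_{v in R+} v_i partial(v) b.
   The matrix sum_{v in R} v^T v commutes with W, so every root is an
   eigenvector of it; the eigenvalues agree because all reflections are
   conjugate, and the roots span V, so it is scalar.  Since R = R+ u -R+,
   sum_{v in R+} v^T v is scalar too, with trace 2 #R+ = N gamma; hence
   sum_{v in R+} v_i v_l = gamma delta_il and
   D_i partial(x) b = (1 + gamma kappa) partial(u_i) b. *)

From HB Require Import structures.
From mathcomp Require Import all_boot all_order all_algebra all_fingroup.
From mathcomp Require Import mpoly.
From Stdlib Require Import ClassicalEpsilon.
Set Implicit Arguments. Unset Strict Implicit. Unset Printing Implicit Defensive.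
Import Order.TTheory GRing.Theory Num.Theory.
Local Open Scope ring_scope.

Section Reflection.
Variables (R : realFieldType) (N : nat).
Implicit Types (u v x y : 'rV[R]_N).

Lemma dotv_mulmx u v : u *m v^T = (dotv u v)%:M.
Proof.
apply/matrixP=> i j; rewrite !ord1 !mxE /dotv; apply: eq_bigr => l _.
by rewrite !mxE.
Qed.

Lemma dotvNl u v : dotv (- u) v = - dotv u v.
Proof. by rewrite /dotv -sumrN; apply: eq_bigr => i _; rewrite mxE mulNr. Qed.

Lemma trmx_refl v : (refl v)^T = refl v.
Proof. by rewrite /refl linearB /= tr_scalar_mx trmx_mul trmxK. Qed.

Lemma mulmx_refl x v : x *m refl v = x - dotv x v *: v.
Proof. by rewrite /refl mulmxDr mulmx1 mulmxN mulmxA dotv_mulmx mul_scalar_mx. Qed.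

Lemma refl_entry v p q : refl v p q = (p == q)%:R - v 0 p * v 0 q.
Proof. by rewrite /refl !mxE big_ord1 !mxE. Qed.

Lemma refl_eigenN v y : y *m refl v = - y -> y = (dotv y v / 2) *: v.
Proof.
rewrite mulmx_refl => e.
have e2 : y + y = dotv y v *: v by rewrite -{2}(opprK y) -e opprB addrC subrK.
have h2 : y = 2^-1 *: (y + y).
  by rewrite -mulr2n -scaler_nat scalerA mulVf ?scale1r // pnatr_eq0.
by rewrite {1}h2 e2 scalerA mulrC.
Qed.

Variable v : 'rV[R]_N.
Hypothesis v_norm2 : dotv v v = 2.

Lemma norm2_neq0 : v != 0.
Proof.
apply/eqP=> v0; move: v_norm2; rewrite v0 /dotv big1 => [/eqP|i _].
  by rewrite eq_sym pnatr_eq0.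
by rewrite mxE mul0r.
Qed.

Lemma mulmx_refl_self : v *m refl v = - v.
Proof. by rewrite mulmx_refl v_norm2 scalerDl scale1r opprD addrA subrr add0r. Qed.

Lemma refl_invol : refl v *m refl v = 1%:M.
Proof.
rewrite {1}/refl mulmxDl mul1mx mulNmx -mulmxA mulmx_refl_self.
by rewrite mulmxN opprK /refl addrNK.
Qed.

End Reflection.

Definition gram (R : realFieldType) (N : nat) (s : seq 'rV[R]_N) : 'M[R]_N :=
  \sum_(v <- s) v^T *m v.

Section RootSystem.
Variables (R : realFieldType) (N : nat) (Rs Rp : seq 'rV[R]_N).
Hypothesis hRs : root_system Rs.
Hypothesis hRp : positive_roots Rs Rp.
Implicit Types (u v : 'rV[R]_N).

Lemma root_norm2 v : v \in Rs -> dotv v v = 2.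
Proof. by case: hRs => _ h _ _ _; apply: h. Qed.

Lemma root_refl u v : u \in Rs -> v \in Rs -> v *m refl u \in Rs.
Proof. by case: hRs => _ _ h _ _; apply: h. Qed.

Lemma rootN v : v \in Rs -> - v \in Rs.
Proof. by move=> vR; rewrite -mulmx_refl_self ?root_norm2 ?root_refl. Qed.

Lemma pos_root v : v \in Rp -> v \in Rs.
Proof. by case: hRp => _ [u0 [_ hp]]; rewrite hp => /andP[]. Qed.

Lemma big_roots_pos (T : zmodType) (F : 'rV[R]_N -> T) :
  (forall v, F (- v) = F v) ->
  \sum_(v <- Rs) F v = (\sum_(v <- Rp) F v) *+ 2.
Proof.
move=> FN; case: hRp => uRp [u0 [nz hp]].
have uRs : uniq Rs by case: hRs.
rewrite (bigID (fun v => 0 < dotv v u0)) /= mulr2n; congr (_ + _).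
  rewrite -big_filter; apply: perm_big; apply: uniq_perm => //; first exact: filter_uniq.
  by move=> x; rewrite mem_filter hp andbC.
rewrite -big_filter (perm_big (map -%R Rp)).
  by rewrite big_map; apply: eq_bigr => v _; rewrite FN.
apply: uniq_perm; first exact: filter_uniq.
  by rewrite map_inj_uniq //; exact: oppr_inj.
move=> x; have -> : (x \in map -%R Rp) = (- x \in Rp).
  by rewrite -{1}(opprK x) (mem_map oppr_inj).
rewrite mem_filter hp dotvNl oppr_gt0 /=.
apply/andP/andP => [[px xR]|[xR px]].
  split; first exact: rootN.
  by rewrite lt_def leNgt px andbT; move: (nz x xR); rewrite eq_sym.
by rewrite -leNgt ltW // -(opprK x) rootN.
Qed.

Lemma gram_roots : gram Rs = gram Rp *+ 2.
Proof. by apply: big_roots_pos => v; rewrite mulmxN -mulNmx linearN opprK. Qed.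

Lemma refl_gram_refl u : u \in Rs -> refl u *m gram Rs *m refl u = gram Rs.
Proof.
move=> uR; rewrite /gram mulmx_sumr mulmx_suml.
transitivity (\sum_(v <- map (fun v => v *m refl u) Rs) v^T *m v).
  by rewrite big_map; apply: eq_bigr => v _; rewrite trmx_mul trmx_refl !mulmxA.
have reflK : cancel (fun v => v *m refl u) (fun v => v *m refl u).
  by move=> v; rewrite -mulmxA refl_invol ?root_norm2 // mulmx1.
apply: perm_big; apply: uniq_perm.
- by rewrite (map_inj_uniq (can_inj reflK)); case: hRs.
- by case: hRs.
move=> x; apply/mapP/idP => [[y yR ->]|xR]; first exact: root_refl.
by exists (x *m refl u); [exact: root_refl | rewrite reflK].
Qed.

Lemma refl_gram_comm u : u \in Rs -> refl u *m gram Rs = gram Rs *m refl u.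
Proof.
by move=> uR; rewrite -{2}(refl_gram_refl uR) -mulmxA refl_invol ?root_norm2 // mulmx1.
Qed.

Lemma W_gram_comm w : in_W Rs w -> w *m gram Rs = gram Rs *m w.
Proof.
case=> s [/allP sR ->] {w}; elim: s sR => [|u s IH] sR.
  by rewrite big_nil mul1mx mulmx1.
have [uR sRs] : u \in Rs /\ {subset s <= Rs}.
  by split=> [|x xs]; apply: sR; rewrite inE ?eqxx ?xs ?orbT.
by rewrite big_cons -mulmxE -mulmxA IH // !mulmxA refl_gram_comm.
Qed.

Lemma pos_root_exists : (0 < N)%N -> exists w, w \in Rp.
Proof.
move=> N0; have [v vR] : exists v, v \in Rs.
  case E: Rs => [|v rs]; last by exists v; rewrite inE eqxx.
  case: hRs => _ _ _ _; rewrite E big_nil submx0.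
  move=> /eqP /matrixP /(_ (Ordinal N0) (Ordinal N0)) /eqP.
  by rewrite !mxE eqxx oner_eq0.
case: hRp => _ [u0 [nz hp]]; have := nz v vR; rewrite neq_lt => /orP[lt|gt].
  by exists (- v); rewrite hp rootN // dotvNl oppr_gt0.
by exists v; rewrite hp vR.
Qed.

Lemma gamma_neq0 : (0 < N)%N -> gamma Rp != 0.
Proof.
move=> N0; have [w wRp] := pos_root_exists N0.
rewrite /gamma mulf_neq0 // ?invr_eq0 pnatr_eq0 -?lt0n // muln_gt0 /=.
by case: Rp wRp.
Qed.

Hypothesis hW : one_refl_class Rs.

(* Each root spans the (-1)-eigenspace of its reflection, which the W-invariant
   form preserves; conjugacy of the reflections makes all eigenvalues equal. *)
Lemma gram_root_eigen : exists lam, forall u, u \in Rs -> u *m gram Rs = lam *: u.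
Proof.
case E: Rs => [|v0 rs]; first by exists 0.
have v0R : v0 \in Rs by rewrite E inE eqxx.
rewrite -E; pose lam := dotv (v0 *m gram Rs) v0 / 2.
have ev0 : v0 *m gram Rs = lam *: v0.
  apply: refl_eigenN.
  by rewrite -mulmxA -refl_gram_comm // mulmxA mulmx_refl_self ?root_norm2 // mulNmx.
exists lam => u uR.
have [w [wW [wU ew]]] := hW uR v0R.
pose z := v0 *m w.
have zr : z *m refl u = - z.
  by rewrite ew /z !mulmxA mulmxK // mulmx_refl_self ?root_norm2 // mulNmx.
have ez := refl_eigenN zr; set c := dotv z u / 2 in ez.
have zG : z *m gram Rs = lam *: z.
  by rewrite /z -mulmxA W_gram_comm // mulmxA ev0 scalemxAl.
have zn0 : z != 0.
  apply/eqP=> z0; have := norm2_neq0 (root_norm2 v0R).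
  by rewrite -(mulmxK wU v0) -/z z0 mul0mx eqxx.
have cn0 : c != 0 by apply: contraNneq zn0 => c0; rewrite ez c0 scale0r.
have -> : u = c^-1 *: z by rewrite ez scalerA mulVf // scale1r.
by rewrite -scalemxAl zG !scalerA mulrC.
Qed.

Lemma gram_scalar : exists lam, gram Rs = lam%:M.
Proof.
have [lam hl] := gram_root_eigen; exists lam.
suff : (1%:M <= kermx (gram Rs - lam%:M))%MS.
  by move/sub_kermxP; rewrite mul1mx => /eqP; rewrite subr_eq0 => /eqP.
case: hRs => _ _ _ _ /submx_trans; apply.
rewrite big_seq; apply: (big_ind (fun X => (X <= kermx (gram Rs - lam%:M))%MS)).
- exact: sub0mx.
- by move=> X Y hX hY; rewrite addsmx_sub hX hY.
by move=> v vR; rewrite genmxE sub_kermx mulmxBr hl // mul_mx_scalar subrr eqxx.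
Qed.

(* The scalar is read off the trace: every root has squared norm 2. *)
Lemma gram_pos_roots : (0 < N)%N -> gram Rp = (gamma Rp)%:M.
Proof.
move=> N0; have [lam hl] := gram_scalar.
have hM : gram Rp = (2^-1 * lam)%:M.
  rewrite -scale_scalar_mx -hl gram_roots -scaler_nat scalerA mulVf ?scale1r //.
  by rewrite pnatr_eq0.
have tr : \tr (gram Rp) = 2 *+ size Rp.
  rewrite /gram raddf_sum /= big_seq (eq_bigr (fun=> 2)).
    by rewrite -big_seq big_const_seq count_predT iter_addr_0.
  by move=> v vR; rewrite mxtrace_mulC dotv_mulmx mxtrace_scalar root_norm2 ?pos_root.
rewrite hM; congr (_%:M); move: tr; rewrite hM mxtrace_scalar /gamma => e2.
have Nn0 : (N%:R : R) != 0 by rewrite pnatr_eq0 -lt0n.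
by apply: (mulIf Nn0); rewrite divfK // mulr_natr e2 natrM mulr_natr.
Qed.

Lemma sum_pos_roots_coord i l : (0 < N)%N ->
  \sum_(v <- Rp) v 0 i * v 0 l = gamma Rp * (i == l)%:R.
Proof.
move=> N0; have := congr1 (fun M : 'M_N => M i l) (gram_pos_roots N0).
rewrite /= summxE mxE mulr_natr => <-.
by apply: eq_bigr => v _; rewrite !mxE big_ord1 !mxE.
Qed.

End RootSystem.

Section Tensor.
Variables (R : realFieldType) (N : nat).

Definition upd k (t : idx N k) (j : 'I_k) (p : 'I_N) : idx N k :=
  [ffun l => if l == j then p else t l].

Lemma upd_id k (t : idx N k) j : upd t j (t j) = t.
Proof. by apply/ffunP => l; rewrite ffunE; case: eqP => // ->. Qed.

Lemma updK k (t : idx N k) j p q : upd (upd t j p) j q = upd t j q.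
Proof. by apply/ffunP => l; rewrite !ffunE; case: eqP. Qed.

Lemma upd_at k (t : idx N k) j p : upd t j p j = p.
Proof. by rewrite ffunE eqxx. Qed.

Lemma sum_idx_upd k (X : idx N k -> R) (j0 : 'I_k) (p0 : 'I_N) :
  \sum_(t : idx N k) X t = \sum_(s : idx N k | s j0 == p0) \sum_(p < N) X (upd s j0 p).
Proof.
rewrite exchange_big /= (partition_big (fun t : idx N k => t j0) predT) //=.
apply: eq_bigr => p _.
rewrite (reindex_onto (fun s => upd s j0 p) (fun t => upd t j0 p0)) /=.
  apply: eq_bigl => s; rewrite upd_at eqxx /= updK.
  by apply/eqP/eqP => [<-|<-]; rewrite ?upd_at ?upd_id.
by move=> t /eqP <-; rewrite updK upd_id.
Qed.

Lemma sum_idx_delta k (c : tens N k R^o) (t : idx N k) :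
  \sum_(t' : idx N k) (\prod_(j < k) (t' j == t j)%:R) * c t' = c t.
Proof.
rewrite (bigD1 t) //= big1 ?mul1r => [|j _]; last by rewrite eqxx.
rewrite big1 ?addr0 // => t' nt.
have [j nj] : exists j, t' j != t j.
  apply/existsP; apply: contraR nt => /existsPn h; apply/eqP/ffunP => j.
  by apply/eqP; move: (h j); rewrite negbK.
by rewrite (bigD1 j) //= (negbTE nj) !mul0r.
Qed.

Section SlotContraction.
Variables (k : nat) (v : 'rV[R]_N) (c : tens N k R^o).
Hypothesis c_contract : forall t j, \sum_(p < N) v 0 p * c (upd t j p) = 0.

Lemma sum_slot_contract (w : idx N k -> R) (j0 : 'I_k) :
  (forall s p, w (upd s j0 p) = w s) ->
  \sum_(t : idx N k) w t * v 0 (t j0) * c t = 0.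
Proof.
move=> wE; have [p0 _ | noN] := pickP (@predT 'I_N); last first.
  by rewrite big1 // => t; have := noN (t j0).
rewrite (sum_idx_upd _ j0 p0) big1 // => s _.
transitivity (w s * \sum_(p < N) v 0 p * c (upd s j0 p)).
  by rewrite mulr_sumr; apply: eq_bigr => p _; rewrite wE upd_at mulrA.
by rewrite c_contract mulr0.
Qed.

(* Expand the product over the k slots one factor at a time: turning the
   n-th slot from the identity into sigma_v subtracts a term killed by
   sum_slot_contract. *)
Lemma tauk_refl_id t : tauk (refl v) c t = c t.
Proof.
pose g n (j : 'I_k) p := if (j < n)%N then refl v p (t j) else (p == t j)%:R.
pose T n := \sum_(t' : idx N k) (\prod_(j < k) g n j (t' j)) * c t'.
have Tk : tauk (refl v) c t = T k.
  by apply: eq_bigr => t' _; congr (_ * _); apply: eq_bigr => j _; rewrite /g ltn_ord.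
have T0 : T 0%N = c t by rewrite -(sum_idx_delta c t).
have TS n : (n < k)%N -> T n.+1 = T n.
  move=> nk; pose j0 : 'I_k := Ordinal nk.
  pose K (s : idx N k) := \prod_(j < k | j != j0) g n j (s j).
  have gS (t' : idx N k) : \prod_(j < k) g n.+1 j (t' j) =
      \prod_(j < k) g n j (t' j) - v 0 (t j0) * K t' * v 0 (t' j0).
    rewrite (bigD1 j0) //= [in RHS](bigD1 j0) //=.
    have -> : \prod_(j < k | j != j0) g n.+1 j (t' j) = K t'.
      apply: eq_bigr => j nj; rewrite /g ltnS leq_eqVlt.
      suff -> : (val j == n) = false by [].
      by apply/negbTE; move: nj; apply: contra => /eqP e; apply/eqP/val_inj.
    rewrite /g /= ltnSn ltnn refl_entry mulrBl.
    by rewrite [v 0 (t' j0) * _]mulrC mulrAC.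
  rewrite /T; under eq_bigr do rewrite gS mulrBl.
  rewrite sumrB sum_slot_contract ?subr0 // => s p.
  by congr (_ * _); apply: eq_bigr => j nj; rewrite ffunE (negbTE nj).
rewrite Tk -T0.
have : (k <= k)%N by [].
elim: {-2}k => [|n IH] nk //.
by rewrite TS // IH // ltnW.
Qed.

End SlotContraction.

Section Alternating.
Variables (k : nat) (b : tens N k.+1 R^o).
Hypothesis b_alt : alternating b.

Lemma icons_upd_tperm (t : idx N k) j l p :
  [ffun x => icons l (upd t j p) (tperm ord0 (lift ord0 j) x)] = icons p (upd t j l).
Proof.
apply/ffunP => x; rewrite !ffunE.
case: (unliftP ord0 x) => [j'|] ->; last by rewrite tpermL liftK upd_at.
have [->|nj] := eqVneq j' j.
  by rewrite tpermR /icons !ffunE ?unlift_none ?liftK ?eqxx ?upd_at.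
rewrite tpermD ?neq_lift ?(inj_eq (@lift_inj _ ord0)) 1?eq_sym //.
by rewrite liftK !ffunE (negbTE nj).
Qed.

(* partial(v) partial(v) b = 0, in any pair of slots: swapping the two
   contracted slots changes the sign. *)
Lemma dpart_contract (v : 'rV[R]_N) (t : idx N k) (j : 'I_k) :
  \sum_(p < N) v 0 p * dpart v b (upd t j p) = 0.
Proof.
pose S := \sum_(p < N) \sum_(l < N) v 0 p * v 0 l * b (icons l (upd t j p)).
have -> : \sum_(p < N) v 0 p * dpart v b (upd t j p) = S.
  apply: eq_bigr => p _; rewrite /dpart mulr_sumr.
  by apply: eq_bigr => l _; rewrite mulrA.
have SN : S = - S.
  rewrite {1}/S exchange_big /= -sumrN; apply: eq_bigr => l _.
  rewrite -sumrN; apply: eq_bigr => p _.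
  have := b_alt (tperm ord0 (lift ord0 j)) (icons p (upd t j l)).
  rewrite icons_upd_tperm odd_tperm neq_lift expr1 => ->.
  by rewrite mulrC [v 0 l * _]mulrC -mulrN scaleN1r mulrC.
have : S *+ 2 == 0 by rewrite mulr2n {1}SN addNr.
by rewrite mulrn_eq0 /= => /eqP.
Qed.

End Alternating.
End Tensor.

Section Polynomial.
Variables (R : realFieldType) (N : nat).

Lemma mpolyCZ (x y : R) : (x * y)%:MP = x *: (y%:MP : Pol R N).
Proof. by rewrite mpolyCM mul_mpolyC. Qed.

Lemma linp_neq0 (v : 'rV[R]_N) : v != 0 -> linp v != 0.
Proof.
move=> vn0; have [i vi] : exists i, v 0 i != 0.
  apply/existsP; apply: contraR vn0 => /existsPn h; apply/eqP/matrixP => a j.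
  by rewrite ord1 mxE; move: (h j); rewrite negbK => /eqP.
apply: contraNneq vi => L0.
have := congr1 (mcoeff U_(i)) L0; rewrite mcoeff0 /linp raddf_sum /=.
rewrite (bigD1 i) //= big1 => [|j nj].
  by rewrite mcoeffZ mcoeffXU eqxx mulr1 addr0 => ->.
by rewrite mcoeffZ mcoeffXU (negbTE nj) mulr0.
Qed.

Lemma xact_linear (w : 'M[R]_N) (c : 'I_N -> R) :
  xact w (\sum_(j < N) c j *: 'X_j) = \sum_(j < N) c j *: \sum_(l < N) w l j *: 'X_l.
Proof.
rewrite /xact raddf_sum /=; apply: eq_bigr => j _.
by rewrite comp_mpolyZ comp_mpolyXU -tnth_nth tnth_mktuple.
Qed.

Lemma sum_refl_X (v : 'rV[R]_N) j :
  \sum_(l < N) refl v l j *: ('X_l : Pol R N) = 'X_j - v 0 j *: linp v.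
Proof.
under eq_bigr do rewrite refl_entry scalerBl.
rewrite sumrB; congr (_ - _).
  rewrite (bigD1 j) //= eqxx scale1r big1 ?addr0 // => l nl.
  by rewrite (negbTE nl) scale0r.
rewrite /linp scaler_sumr; apply: eq_bigr => l _.
by rewrite scalerA mulrC.
Qed.

(* [ddiff] is defined by choice; the quotient is unique as [linp v] is a
   nonzero polynomial. *)
Lemma ddiff_linear (v : 'rV[R]_N) (c : 'I_N -> R) : v != 0 ->
  ddiff v (\sum_(j < N) c j *: 'X_j) = (\sum_(j < N) v 0 j * c j)%:MP.
Proof.
move=> vn0; set p := \sum_(j < N) c j *: 'X_j; set d := \sum_(j < N) v 0 j * c j.
have hd : d%:MP * linp v = p - xact (refl v) p.
  rewrite {2}/p xact_linear mul_mpolyC.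
  under [X in _ = _ - X]eq_bigr do rewrite sum_refl_X scalerBr scalerA.
  rewrite sumrB /p opprB addrC subrK -scaler_suml /d.
  by congr (_ *: _); apply: eq_bigr => j _; rewrite mulrC.
have := epsilon_spec (inhabits 0) (fun q => q * linp v = p - xact (refl v) p)
  (ex_intro _ _ hd).
by rewrite -/(ddiff v p) -hd => /mulIf; apply; exact: linp_neq0.
Qed.

End Polynomial.

Section DunklSingular.
Variables (R : realFieldType) (N k : nat) (b : tens N k.+1 R^o).

Lemma dpart_delta_mx i t : dpart (delta_mx 0 i) b t = b (icons i t).
Proof.
rewrite /dpart (bigD1 i) //= mxE !eqxx mul1r big1 ?addr0 // => j nj.
by rewrite mxE eqxx (negbTE nj) mul0r.
Qed.

Lemma dpartxE t : dpartx b t = \sum_(i < N) b (icons i t) *: 'X_i.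
Proof. by apply: eq_bigr => i _; rewrite dpart_delta_mx. Qed.

Lemma dpartx_P1 t : P1 (dpartx b t).
Proof.
have : dpartx b t \in [in R[N], 1.-homog].
  rewrite dpartxE; apply: rpred_sum => i _; apply: rpredZ.
  by rewrite dhomogX; apply/eqP; apply: mdeg1.
by [].
Qed.

Lemma mderiv_dpartx i t : mderiv i (dpartx b t) = (b (icons i t) : R)%:MP.
Proof.
rewrite dpartxE raddf_sum /= (bigD1 i) //= big1 ?addr0 => [|j nj].
  rewrite mderivZ mderivX mnm1E eqxx scale1r.
  have -> : (U_(i) - U_(i))%MM = 0%MM by rewrite -{1}(add0m U_(i)%MM) addmK.
  by rewrite mpolyX0 -mul_mpolyC mulr1.
by rewrite mderivZ mderivX mnm1E (negbTE nj) scale0r scaler0.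
Qed.

Lemma sum_pos_roots_dpart (Rs Rp : seq 'rV[R]_N) i t :
  root_system Rs -> positive_roots Rs Rp -> one_refl_class Rs -> (0 < N)%N ->
  \sum_(v <- Rp) v 0 i * dpart v b t = gamma Rp * b (icons i t).
Proof.
move=> hRs hRp hW N0.
transitivity (\sum_(l < N) (\sum_(v <- Rp) v 0 i * v 0 l) * b (icons l t)).
  rewrite /dpart; under eq_bigr do rewrite mulr_sumr.
  rewrite exchange_big /=; apply: eq_bigr => l _; rewrite mulr_suml.
  by apply: eq_bigr => v _; rewrite mulrA.
under eq_bigr do rewrite (sum_pos_roots_coord hRs hRp hW _ _ N0) -mulrA.
rewrite -mulr_sumr (bigD1 i) //= eqxx mul1r big1 ?addr0 // => l nl.
by rewrite eq_sym (negbTE nl) mul0r.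
Qed.

Hypothesis b_alt : alternating b.

Lemma dpartx_alt : alternating (dpartx b).
Proof.
move=> s t; rewrite !dpartxE scaler_sumr; apply: eq_bigr => i _.
have -> : icons i [ffun j => t (s j)] = [ffun x => icons i t (lift_perm ord0 ord0 s x)].
  apply/ffunP => x; rewrite !ffunE.
  case: (unliftP ord0 x) => [j|] ->; last by rewrite lift_perm_id unlift_none.
  by rewrite lift_perm_lift /icons !ffunE !liftK.
by rewrite b_alt odd_lift_perm scalerA.
Qed.

(* sigma_v fixes the contraction of b with v, and the divided difference of
   the linear form partial(x) b is the constant partial(v) b. *)
Lemma Dunkl_dpartx (Rp : seq 'rV[R]_N) kappa i t : (forall v, v \in Rp -> v != 0) ->
  Dunkl Rp kappa i (dpartx b) t =
    (b (icons i t) + kappa * \sum_(v <- Rp) v 0 i * dpart v b t)%:MP.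
Proof.
move=> Rp_neq0; rewrite /Dunkl mderiv_dpartx mpolyCD mpolyCZ; congr (_ + _ *: _).
rewrite raddf_sum /= big_seq [RHS]big_seq; apply: eq_bigr => v vRp.
rewrite -(tauk_refl_id (dpart_contract b_alt v) t) mpolyCZ; congr (_ *: _).
rewrite /tauk raddf_sum; apply: eq_bigr => t' _.
by rewrite dpartxE ddiff_linear ?Rp_neq0 // -mpolyCZ.
Qed.

End DunklSingular.

Theorem theorem3p6 (R : realFieldType) (N : nat) (Rs Rp : seq 'rV[R]_N)
    (kappa : R) (k : nat) (a : 'rV[R]_N) (b : tens N k.+1 R^o) :
  root_system Rs -> positive_roots Rs Rp -> one_refl_class Rs ->
  (k.+1 <= N)%N ->
  alternating b ->
  [/\ alternating (dpartx b) /\ (forall t, P1 (dpartx b t)),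
      (forall t, \sum_(i < N) a 0 i *: Dunkl Rp kappa i (dpartx b) t
                 = ((1 + gamma Rp * kappa) * dpart a b t)%:MP) &
      (kappa = - 1 / gamma Rp ->
         forall (i : 'I_N) t, Dunkl Rp kappa i (dpartx b) t = 0)].
Proof.
move=> hRs hRp hW kN b_alt; have N0 : (0 < N)%N := leq_trans (ltn0Sn k) kN.
have Rp_neq0 v : v \in Rp -> v != 0.
  by move/(pos_root hRp)/(root_norm2 hRs)/norm2_neq0.
have DE i t :
    Dunkl Rp kappa i (dpartx b) t = ((1 + gamma Rp * kappa) * b (icons i t))%:MP.
  rewrite Dunkl_dpartx // (sum_pos_roots_dpart b i t hRs hRp hW N0).
  by rewrite mulrDl mul1r mulrCA mulrA.
split=> [|t|kappaE i t].
- by split; [exact: dpartx_alt | exact: dpartx_P1].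
- under eq_bigr do rewrite DE -mpolyCZ.
  rewrite -raddf_sum /dpart mulr_sumr; congr (_%:MP).
  by apply: eq_bigr => i _; rewrite mulrCA.
have g0 : gamma Rp != 0 by apply: gamma_neq0 hRs hRp N0.
by rewrite DE kappaE mulrCA mulN1r mulfV // subrr mul0r raddf0.
Qed.
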